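(* Let an instance have $D_i>0$ for all $i\in\mathcal D$, and let $x$ be a minimum cost assignment in which every demand is entirely assigned to exactly one FC: for each $i$ there is a unique $j(i)\in\mathcal F$ with $x_{i\,j(i)}=D_i$ and $x_{ij}=0$ for $j\ne j(i)$. Define the weighted directed graph $\mathcal G_x$ on vertex set $\{r\}\cup\mathcal F\cup\mathcal D$ with: an arc $r\to j$ of weight $0$ for every $j\in\mathcal F$; an arc $j(i)\to i$ of weight $-\ell_{i\,j(i)}$ for every $i\in\mathcal D$; and an arc $i\to j$ of weight $\ell_{ij}$ for every $i\in\mathcal D$ and $j\in\mathcal F$ with $j\ne j(i)$. Then $\mathcal G_x$ has no negative-weight directed cycle. Let $-\beta_j$ (resp. $-\delta_i$) be the minimum weight of a directed path from $r$ to $j$ (resp. to $i$) in $\mathcal G_x$. Then $(x,\beta)$ is an equilibrium solution, $\delta_i=\min_{j}(\ell_{ij}+\beta_j)$ for every $i$, and for every equilibrium solution $(x',\beta')$ with delays $\delta'_i=\min_j(\ell_{ij}+\beta'_j)$ we have $\delta_i\le\delta'_i$ for all $i\in\mathcal D$. In particular $(x,\beta)$ is a minimum-delay equilibrium solution.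
   Context: An instance consists of finite sets $\mathcal D$ (demand nodes) and $\mathcal F$ (FCs), finite nonnegative travel times $\ell_{ij}$, demands $D_i\ge0$ and capacities $C_j\ge0$ with $\sum_iD_i\le\sum_jC_j$. An assignment is $x\in\mathbb R_{\ge0}^{\mathcal D\times\mathcal F}$ with $\sum_jx_{ij}=D_i$ for all $i$ and $\sum_ix_{ij}\le C_j$ for all $j$; a minimum cost assignment minimizes $\sum_{ij}\ell_{ij}x_{ij}$. An equilibrium solution is a pair $(x,\beta)$ with $x$ an assignment and $\beta\in\mathbb R^{\mathcal F}_{\ge0}$ such that $x_{ij}>0$ only if $j\in\arg\min_{j'}(\ell_{ij'}+\beta_{j'})$, and $\beta_j=0$ whenever $\sum_ix_{ij}<C_j$. The delay of demand $i$ is $\delta_i=\min_j(\ell_{ij}+\beta_j)$ and the delay of the solution is $\sum_iD_i\delta_i$. *)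

From HB Require Import structures.
From mathcomp Require Import all_boot all_order all_algebra.
Set Implicit Arguments. Unset Strict Implicit. Unset Printing Implicit Defensive.
Import Order.TTheory GRing.Theory Num.Theory.
Local Open Scope ring_scope.

Section Defs.
Variables (R : realFieldType) (Dn Fc : finType).
Implicit Types (l : Dn -> Fc -> R) (Dm : Dn -> R) (C : Fc -> R)
  (x : Dn -> Fc -> R) (beta : Fc -> R).

Definition instance l Dm C : Prop :=
  (forall i j, 0 <= l i j) /\ (forall i, 0 <= Dm i) /\ (forall j, 0 <= C j) /\
  \sum_i Dm i <= \sum_j C j.

Definition is_assignment Dm C x : Prop :=
  (forall i j, 0 <= x i j) /\ (forall i, \sum_j x i j = Dm i) /\
  (forall j, \sum_i x i j <= C j).

Definition cost l x : R := \sum_i \sum_j l i j * x i j.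

Definition min_cost_assignment l Dm C x : Prop :=
  is_assignment Dm C x /\ forall y, is_assignment Dm C y -> cost l x <= cost l y.

Definition equilibrium l Dm C x beta : Prop :=
  is_assignment Dm C x /\ (forall j, 0 <= beta j) /\
  (forall i j, 0 < x i j -> forall j', l i j + beta j <= l i j' + beta j') /\
  (forall j, \sum_i x i j < C j -> beta j = 0).

(* minimum over the finite set Fc (default 0 if Fc is empty) *)
Definition fmin (f : Fc -> R) : R :=
  if [pick j : Fc] is Some j0 then \big[Num.min/f j0]_j f j else 0.

Definition delay l beta (i : Dn) : R := fmin (fun j => l i j + beta j).

Definition total_delay l Dm beta : R := \sum_i Dm i * delay l beta i.

(* The graph G_x: vertices r (= None), FCs (Some (inl j)), demands (Some (inr i)).
   garc u v = Some w iff there is an arc u -> v of weight w. *)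
Definition Vtx := option (Fc + Dn)%type.
Definition groot : Vtx := None.
Definition vF (j : Fc) : Vtx := Some (inl j).
Definition vD (i : Dn) : Vtx := Some (inr i).

Definition garc l (jsel : Dn -> Fc) (u v : Vtx) : option R :=
  match u, v with
  | None, Some (inl _) => Some 0
  | Some (inl j), Some (inr i) => if j == jsel i then Some (- l i j) else None
  | Some (inr i), Some (inl j) => if j != jsel i then Some (l i j) else None
  | _, _ => None
  end.

Definition is_arc (g : Vtx -> Vtx -> option R) : rel Vtx :=
  fun u v => g u v != None.

Definition walk_weight (g : Vtx -> Vtx -> option R) (u : Vtx) (p : seq Vtx) : R :=
  \sum_(e <- zip (u :: p) p) odflt 0 (g e.1 e.2).

Definition dpath g (u : Vtx) (p : seq Vtx) (v : Vtx) : Prop :=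
  path (is_arc g) u p /\ last u p = v /\ uniq (u :: p).

Definition dcycle g (u : Vtx) (p : seq Vtx) : Prop :=
  p != [::] /\ path (is_arc g) u p /\ last u p = u /\ uniq p.

Definition no_neg_cycle g : Prop :=
  forall u p, dcycle g u p -> 0 <= walk_weight g u p.

Definition is_min_path_weight g (u v : Vtx) (m : R) : Prop :=
  (exists p, dpath g u p v /\ walk_weight g u p = m) /\
  (forall p, dpath g u p v -> m <= walk_weight g u p).

End Defs.

From HB Require Import structures.
From mathcomp Require Import all_boot all_order all_algebra.
From mathcomp Require Import lra.
Import Order.TTheory GRing.Theory Num.Theory.
Set Implicit Arguments. Unset Strict Implicit. Unset Printing Implicit Defensive.
Local Open Scope ring_scope.

(* Along a walk of G_x, an arc j(i) -> i takes demand i off j(i) and an arc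
   i -> j puts it onto j. Pushing a small amount of flow along a simple cycle,
   or along a simple path from r to an FC with spare capacity, thus gives
   another assignment whose cost exceeds that of x by a positive multiple of
   the walk weight; by minimality of x such walks have nonnegative weight.
   Hence G_x has no negative cycle, shortest-path distances obey the triangle
   inequality along arcs, and these inequalities are exactly the equilibrium
   conditions for beta, with delta_i = l_{i j(i)} + beta_{j(i)}.
   Conversely, for an equilibrium (x', beta'), LP duality and minimality of x
   force every demand i to be served by a beta'-cheapest FC j(i), so -beta' on
   FCs and -delta'_i on demands form a feasible potential of G_x, which bounds
   the path weights -beta_j from below: beta <= beta', hence delta <= delta'. *)


Section ZipSums.
Variables (R : realFieldType) (T : eqType).
Implicit Types (u w : T) (p : seq T).

Lemma sum_zip_telescope u p w :
  \sum_(e <- zip (u :: p) p) (((e.2 == w)%:R : R) - (e.1 == w)%:R)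
  = (last u p == w)%:R - (u == w)%:R.
Proof.
elim: p u => [|v p IH] u /=; first by rewrite big_nil subrr.
by rewrite big_cons /= IH; lra.
Qed.

Lemma sum_zip_count u p w :
  \sum_(e <- zip (u :: p) p) ((e.2 == w)%:R : R) = (count_mem w p)%:R.
Proof.
elim: p u => [|v p IH] u /=; first by rewrite big_nil.
by rewrite big_cons /= IH natrD.
Qed.

Lemma path_zip_arcs (e : rel T) u p a :
  path e u p -> a \in zip (u :: p) p -> e a.1 a.2.
Proof.
elim: p u => [|v p IH] u //= /andP[euv pv].
by rewrite in_cons => /predU1P[-> //|]; apply: IH.
Qed.

End ZipSums.

Fixpoint seqs_upto (T : finType) (n : nat) : seq (seq T) :=
  if n is n'.+1 then [::] :: [seq a :: s | a <- enum T, s <- seqs_upto T n']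
  else [:: [::]].

Lemma mem_seqs_upto (T : finType) n (s : seq T) :
  (size s <= n)%N -> s \in seqs_upto T n.
Proof.
elim: n s => [|n IH] [|a s] //=; rewrite ?mem_head // ltnS => /IH s_n.
by rewrite in_cons; apply/orP; right; apply: allpairs_f; rewrite ?mem_enum.
Qed.

Section Walks.
Variables (R : realFieldType) (Dn Fc : finType).
Variable g : Vtx Dn Fc -> Vtx Dn Fc -> option R.
Local Notation V := (Vtx Dn Fc).
Local Notation w a b := (odflt 0 (g a b)).
Implicit Types (u v a b : V) (p q : seq V).

Lemma walk_weight_nil u : walk_weight g u [::] = 0.
Proof. by rewrite /walk_weight big_nil. Qed.

Lemma walk_weight_cons u v p :
  walk_weight g u (v :: p) = w u v + walk_weight g v p.
Proof. by rewrite /walk_weight /= big_cons. Qed.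

Lemma walk_weight_cat u p q :
  walk_weight g u (p ++ q) = walk_weight g u p + walk_weight g (last u p) q.
Proof.
elim: p u => [|v p IH] u /=; first by rewrite walk_weight_nil add0r.
by rewrite !walk_weight_cons IH addrA.
Qed.

Lemma walk_weight_rcons u p b :
  walk_weight g u (rcons p b) = walk_weight g u p + w (last u p) b.
Proof. by rewrite -cats1 walk_weight_cat walk_weight_cons walk_weight_nil addr0. Qed.

Definition feasible_potential (phi : V -> R) : Prop :=
  forall a b, is_arc g a b -> phi b - phi a <= w a b.

Lemma walk_weight_ge_potential phi u p :
  feasible_potential phi -> path (is_arc g) u p ->
  phi (last u p) - phi u <= walk_weight g u p.
Proof.
move=> phi_feas; elim: p u => [|v p IH] u /=; first by rewrite walk_weight_nil subrr.
case/andP=> /phi_feas uv /IH vp; rewrite walk_weight_cons; lra.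
Qed.

Lemma dpath_rcons u p b :
  dpath g u p (last u p) -> is_arc g (last u p) b -> b \notin u :: p ->
  dpath g u (rcons p b) b.
Proof.
move=> [up [_ Uup]] ab bNup; split; first by rewrite rcons_path up.
by rewrite last_rcons -rcons_cons rcons_uniq bNup.
Qed.

Lemma dpath_last_arc u p v :
  dpath g u p v -> u != v ->
  exists2 q, p = rcons q v & dpath g u q (last u q) /\ is_arc g (last u q) v.
Proof.
case: (lastP p) => [[_ [<- _]]|q b [up [lb Uup]]]; first by rewrite eqxx.
move: up lb Uup; rewrite rcons_path last_rcons -rcons_cons rcons_uniq.
by move=> /andP[uq qb] <- /andP[_ Uuq] _; exists q.
Qed.

(* If [b] already lies on the path, cutting it there drops a cycle of nonnegative weight. *)
Lemma dpath_arc_shortcut u p a b :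
  no_neg_cycle g -> dpath g u p a -> is_arc g a b ->
  exists2 q, dpath g u q b & walk_weight g u q <= walk_weight g u p + w a b.
Proof.
move=> no_neg up_a ab; case: (up_a) => up [lp Uup].
have [bup|bNup] := boolP (b \in u :: p); last first.
  exists (rcons p b); first by apply: dpath_rcons; rewrite ?lp //; split.
  by rewrite walk_weight_rcons lp.
case/splitPl: bup up lp Uup {up_a} => p1 p2 lp1.
rewrite cat_path last_cat lp1 -cat_cons cat_uniq => /andP[up1 bp2] lp2.
case/and3P=> Uup1 disj Up2.
have bNp2 : b \notin p2.
  by apply: contra disj => bp2'; apply/hasP; exists b; rewrite // -lp1 mem_last.
exists p1; first by split; rewrite ?lp1.
have cyc : dcycle g b (rcons p2 b).
  split; first by case: p2 {bp2 lp2 Up2 disj bNp2}.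
  by rewrite rcons_path bp2 lp2 last_rcons rcons_uniq bNp2 Up2.
have := no_neg _ _ cyc; rewrite walk_weight_cat lp1 walk_weight_rcons lp2; lra.
Qed.

Lemma min_path_weight_arc u a b ma mb :
  no_neg_cycle g -> is_min_path_weight g u a ma -> is_min_path_weight g u b mb ->
  is_arc g a b -> mb <= ma + w a b.
Proof.
move=> no_neg [[p [up_a <-]] _] [_ mb_min] ab.
have [q uq_b le_q] := dpath_arc_shortcut no_neg up_a ab.
exact: le_trans (mb_min q uq_b) le_q.
Qed.

Lemma min_path_weight_last_arc u v mv :
  is_min_path_weight g u v mv -> u != v ->
  exists a, exists2 q, dpath g u q a /\ is_arc g a v & mv = walk_weight g u q + w a v.
Proof.
move=> [[p [up_v <-]] _] uv.
have [q -> [uq qv]] := dpath_last_arc up_v uv.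
by exists (last u q), q; rewrite ?walk_weight_rcons.
Qed.

Lemma min_path_weight_ge_potential phi u v m :
  feasible_potential phi -> is_min_path_weight g u v m -> phi v - phi u <= m.
Proof.
move=> phi_feas [[p [[up [lp _]] <-]] _].
by rewrite -lp; apply: walk_weight_ge_potential.
Qed.

Lemma min_path_weight_exists u v :
  (exists p, dpath g u p v) -> exists m, is_min_path_weight g u v m.
Proof.
move=> [p0 up0_v].
pose P p := [&& path (is_arc g) u p, last u p == v & uniq (u :: p)].
have dpathP p : dpath g u p v <-> P p.
  rewrite /P; split=> [[-> [-> ->]]|/and3P[up /eqP lp Uup]]; rewrite ?eqxx //.
have bounded p : dpath g u p v -> p \in seqs_upto _ #|{: V}|.
  move=> [_ [_ /= /andP[_ Up]]].
  by apply: mem_seqs_upto; rewrite -(card_uniqP Up) max_card.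
pose S := seq_sub (seqs_upto V #|{: V}|).
have [q /dpathP uq_v q_min] := @arg_minP _ _ S (SeqSub (bounded _ up0_v))
  (fun q : S => P (ssval q)) (fun q : S => walk_weight g u (ssval q)) ((dpathP _).1 up0_v).
exists (walk_weight g u (ssval q)); split; first by exists (ssval q).
by move=> p up_v; apply: (q_min (SeqSub (bounded _ up_v))); apply/dpathP.
Qed.

End Walks.

Section FiniteMin.
Variables (R : realFieldType) (Fc : finType).
Implicit Types f h : Fc -> R.

Lemma fmin_le f j : fmin f <= f j.
Proof. by rewrite /fmin; case: pickP => [j0 _|/(_ j) //]; apply: bigmin_le. Qed.

Lemma fmin_eq f j0 : (forall j, f j0 <= f j) -> fmin f = f j0.
Proof.
move=> j0_min; apply/le_anti; rewrite fmin_le /fmin.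
by case: pickP => [j1 _|/(_ j0) //]; apply: le_bigmin.
Qed.

Lemma le_fmin f h : (forall j, f j <= h j) -> fmin f <= fmin h.
Proof.
move=> le_fh; rewrite /fmin; case: pickP => [j0 _|//].
by apply: le_bigmin => [|j _]; apply: le_trans (bigmin_le _ _ _) (le_fh _).
Qed.

End FiniteMin.

Section Indicators.
Variables (R : realFieldType) (I J : finType).

Lemma sum_indicator (K : finType) (k0 : K) : \sum_k ((k0 == k)%:R : R) = 1.
Proof. by rewrite (bigD1 k0) //= eqxx big1 ?addr0 // => k /negPf; rewrite eq_sym => ->. Qed.

Lemma sum_indicator2l (i0 : I) (j0 : J) j :
  \sum_i (((i0 == i) && (j0 == j))%:R : R) = (j0 == j)%:R.
Proof. by under eq_bigr do rewrite -mulnb natrM; rewrite -mulr_suml sum_indicator mul1r. Qed.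

Lemma sum_indicator2r (i0 : I) (j0 : J) i :
  \sum_j (((i0 == i) && (j0 == j))%:R : R) = (i0 == i)%:R.
Proof. by under eq_bigr do rewrite -mulnb natrM; rewrite -mulr_sumr sum_indicator mulr1. Qed.

Lemma sum_indicator2 (F : I -> J -> R) (i0 : I) (j0 : J) :
  \sum_i \sum_j F i j * ((i0 == i) && (j0 == j))%:R = F i0 j0.
Proof.
rewrite (bigD1 i0) //= [X in _ + X]big1 => [|i /negPf i0i]; last first.
  by rewrite big1 // => j _; rewrite eq_sym i0i mulr0.
rewrite addr0 (bigD1 j0) //= !eqxx mulr1 big1 ?addr0 // => j /negPf.
by rewrite eq_sym => ->; rewrite mulr0.
Qed.

End Indicators.

Section SupplyGraph.
Variables (R : realFieldType) (Dn Fc : finType) (l : Dn -> Fc -> R) (jsel : Dn -> Fc).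
Local Notation G := (garc l jsel).
Local Notation V := (Vtx Dn Fc).
Local Notation vF := (@vF Dn Fc).
Local Notation vD := (@vD Dn Fc).

Lemma vF_eq j j' : (vF j == vF j') = (j == j').
Proof. by apply/eqP/eqP => [[]|->]. Qed.

Lemma garc_into_vD a i : is_arc G a (vD i) -> a = vF (jsel i).
Proof. by case: a => [[j|i']|] //; rewrite /is_arc /=; case: ifP => // /eqP ->. Qed.

Lemma garc_vF_vD i : G (vF (jsel i)) (vD i) = Some (- l i (jsel i)).
Proof. by rewrite /= eqxx. Qed.

Lemma garc_vD_vF i j : j != jsel i -> G (vD i) (vF j) = Some (l i j).
Proof. by rewrite /= => ->. Qed.

(* Traversing an arc [j(i) -> i] moves one unit of demand [i] away from [j(i)];
   traversing [i -> j] moves one unit of it onto [j]. *)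
Definition arc_shift (e : V * V) (i : Dn) (j : Fc) : R :=
  match e with
  | (Some (inl j'), Some (inr i')) => - ((i' == i) && (j' == j))%:R
  | (Some (inr i'), Some (inl j')) => ((i' == i) && (j' == j))%:R
  | _ => 0
  end.

Lemma arc_shift_cost e : is_arc G e.1 e.2 ->
  \sum_i \sum_j l i j * arc_shift e i j = odflt 0 (G e.1 e.2).
Proof.
case: e => [[[j'|i']|] [[j2|i2]|]]; rewrite /is_arc //=;
  try by move=> _; rewrite big1 // => i _; rewrite big1 // => j _; rewrite mulr0.
- case: ifP => // /eqP -> _ /=; rewrite -(sum_indicator2 l) -sumrN.
  by apply: eq_bigr => i _; rewrite -sumrN; apply: eq_bigr => j _; rewrite mulrN.
- by case: ifP => // _ _; rewrite sum_indicator2.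
Qed.

Lemma arc_shift_row e i : is_arc G e.1 e.2 ->
  \sum_j arc_shift e i j = (e.1 == vD i)%:R - (e.2 == vD i)%:R.
Proof.
case: e => [[[j'|i']|] [[j2|i2]|]]; rewrite /is_arc /vD //= => _ /=;
  by rewrite ?sumrN ?sum_indicator2r ?big1 ?sub0r ?subr0 ?oppr0.
Qed.

Lemma arc_shift_col e j : is_arc G e.1 e.2 ->
  \sum_i arc_shift e i j <= (e.2 == vF j)%:R - (e.1 == vF j)%:R.
Proof.
case: e => [[[j'|i']|] [[j2|i2]|]]; rewrite /is_arc /vF //= => _ /=;
  by rewrite ?sumrN ?sum_indicator2l ?big1 ?sub0r ?subr0 ?oppr0.
Qed.

Lemma arc_shift_ge0 e i j : is_arc G e.1 e.2 -> j != jsel i -> 0 <= arc_shift e i j.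
Proof.
case: e => [[[j'|i']|] [[j2|i2]|]]; rewrite /is_arc //=.
case: ifP => // /eqP -> _ ji; rewrite oppr_ge0 lern0 eqb0.
by apply: contraNN ji => /andP[/eqP-> /eqP->].
Qed.

Lemma arc_shift_ge e i j : - (e.2 == vD i)%:R <= arc_shift e i j.
Proof.
case: e => [[[j'|i']|] [[j2|i2]|]] /=; rewrite ?oppr0 ?oppr_le0 ?ler0n //.
by rewrite lerN2 ler_nat; case: (eqVneq i2 i) => [->|//]; rewrite eqxx leq_b1.
Qed.

End SupplyGraph.

Section Perturbation.
Variables (R : realFieldType) (Dn Fc : finType) (l : Dn -> Fc -> R) (jsel : Dn -> Fc).
Local Notation G := (garc l jsel).
Local Notation V := (Vtx Dn Fc).
Local Notation vF := (@vF Dn Fc).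
Local Notation vD := (@vD Dn Fc).

Variables (u : V) (p : seq V).
Hypothesis up : path (is_arc G) u p.

Definition walk_shift i j : R := \sum_(e <- zip (u :: p) p) arc_shift R e i j.

Lemma walk_shift_cost : \sum_i \sum_j l i j * walk_shift i j = walk_weight G u p.
Proof.
transitivity (\sum_(e <- zip (u :: p) p) \sum_i \sum_j l i j * arc_shift R e i j).
  rewrite [RHS]exchange_big; apply: eq_bigr => i _.
  by rewrite [RHS]exchange_big; apply: eq_bigr => j _; rewrite mulr_sumr.
rewrite /walk_weight !big_seq; apply: eq_bigr => e /(path_zip_arcs up).
exact: arc_shift_cost.
Qed.

Lemma walk_shift_row i :
  \sum_j walk_shift i j = (u == vD i)%:R - (last u p == vD i)%:R.
Proof.
rewrite exchange_big big_seq /=.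
under eq_bigr => e /(path_zip_arcs up) ea do rewrite (arc_shift_row i ea).
rewrite -big_seq -[RHS]opprB -(sum_zip_telescope R) -sumrN.
by apply: eq_bigr => e _; rewrite opprB.
Qed.

Lemma walk_shift_col j :
  \sum_i walk_shift i j <= (last u p == vF j)%:R - (u == vF j)%:R.
Proof.
rewrite exchange_big -(sum_zip_telescope R) !big_seq /=.
by apply: ler_sum => e /(path_zip_arcs up) ea; apply: (arc_shift_col j ea).
Qed.

Lemma walk_shift_ge0 i j : j != jsel i -> 0 <= walk_shift i j.
Proof.
move=> ji; rewrite /walk_shift big_seq.
by apply: sumr_ge0 => e /(path_zip_arcs up) ea; apply: (arc_shift_ge0 ea ji).
Qed.

Lemma walk_shift_geN1 i j : uniq p -> -1 <= walk_shift i j.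
Proof.
move=> Up; rewrite /walk_shift; apply: le_trans (ler_sum _ (fun e _ => @arc_shift_ge R _ _ e i j)).
by rewrite sumrN sum_zip_count lerN2 lern1 count_uniq_mem // leq_b1.
Qed.

Variables (Dm : Dn -> R) (C : Fc -> R) (x : Dn -> Fc -> R).
Hypothesis x_min : min_cost_assignment l Dm C x.

Lemma min_cost_walk_weight_ge0 eps :
  uniq p -> 0 < eps -> (forall i, eps <= x i (jsel i)) ->
  (forall i, (u == vD i) = (last u p == vD i)) ->
  (forall j, \sum_i x i j + eps * ((last u p == vF j)%:R - (u == vF j)%:R) <= C j) ->
  0 <= walk_weight G u p.
Proof.
move=> Up eps_gt0 eps_le same_demand col_room.
have [[x_ge0 [x_row _]] x_le] := x_min.
pose y i j := x i j + eps * walk_shift i j.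
have y_asg : is_assignment Dm C y.
  split; [|split] => [i j|i|j]; rewrite /y.
  - have [->|ji] := eqVneq j (jsel i).
      have := walk_shift_geN1 i (jsel i) Up; have := eps_le i; nra.
    exact: addr_ge0 (x_ge0 i j) (mulr_ge0 (ltW eps_gt0) (walk_shift_ge0 ji)).
  - by rewrite big_split -mulr_sumr /= walk_shift_row same_demand subrr mulr0 addr0.
  - rewrite big_split -mulr_sumr /=; apply: le_trans (col_room j).
    by rewrite lerD2l ler_wpM2l ?(ltW eps_gt0) ?walk_shift_col.
have cost_y : cost l y = cost l x + eps * walk_weight G u p.
  rewrite -walk_shift_cost /cost mulr_sumr -big_split; apply: eq_bigr => i _ /=.
  by rewrite mulr_sumr -big_split; apply: eq_bigr => j _; rewrite mulrDr mulrCA.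
by have := x_le y y_asg; rewrite cost_y lerDl pmulr_rge0.
Qed.

End Perturbation.

Section Duality.
Variables (R : realFieldType) (Dn Fc : finType).
Variables (l : Dn -> Fc -> R) (Dm : Dn -> R) (C : Fc -> R) (beta : Fc -> R).
Implicit Types y : Dn -> Fc -> R.

Definition dual_gap y : R :=
  \sum_i \sum_j (l i j + beta j - delay l beta i) * y i j.

Lemma dual_gap_ge0 y : (forall i j, 0 <= y i j) -> 0 <= dual_gap y.
Proof.
move=> y_ge0; apply: sumr_ge0 => i _; apply: sumr_ge0 => j _.
by rewrite mulr_ge0 // subr_ge0; apply: fmin_le.
Qed.

Lemma dual_gap_eq y : is_assignment Dm C y ->
  dual_gap y = cost l y + \sum_j beta j * \sum_i y i j - \sum_i Dm i * delay l beta i.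
Proof.
move=> [_ [y_row _]].
have -> : dual_gap y = cost l y + \sum_i \sum_j beta j * y i j
                       - \sum_i \sum_j delay l beta i * y i j.
  rewrite /dual_gap /cost -big_split -sumrB; apply: eq_bigr => i _.
  by rewrite -big_split -sumrB; apply: eq_bigr => j _; rewrite /= !mulrDl mulNr.
rewrite exchange_big; congr (_ + _ - _); apply: eq_bigr.
  by move=> j _; rewrite mulr_sumr.
by move=> i _; rewrite -mulr_sumr y_row mulrC.
Qed.

Lemma dual_gap_le y : is_assignment Dm C y -> (forall j, 0 <= beta j) ->
  dual_gap y <= cost l y + \sum_j beta j * C j - \sum_i Dm i * delay l beta i.
Proof.
move=> y_asg beta_ge0; rewrite dual_gap_eq // lerD2r lerD2l.
by apply: ler_sum => j _; rewrite ler_wpM2l //; case: y_asg => _ [_].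
Qed.

(* Complementary slackness: weak duality is tight at an equilibrium. *)
Lemma equilibrium_dual_gap y : equilibrium l Dm C y beta ->
  cost l y + \sum_j beta j * C j - \sum_i Dm i * delay l beta i = 0.
Proof.
move=> [y_asg [_ [y_opt y_slack]]].
have gap0 : dual_gap y = 0.
  apply: big1 => i _; apply: big1 => j _.
  have [->|y_ne0] := eqVneq (y i j) 0; first by rewrite mulr0.
  have y_gt0 : 0 < y i j by rewrite lt_def y_ne0; case: y_asg => ->.
  by rewrite /delay (fmin_eq (y_opt i j y_gt0)) subrr mul0r.
rewrite -[RHS]gap0 dual_gap_eq //; congr (_ + _ - _); apply: eq_bigr => j _.
have [_ [_ /(_ j)]] := y_asg; rewrite le_eqVlt => /predU1P[-> //|/y_slack->].
by rewrite !mul0r.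
Qed.

Lemma min_cost_dual_gap x y :
  min_cost_assignment l Dm C x -> equilibrium l Dm C y beta -> dual_gap x = 0.
Proof.
move=> [x_asg x_min] y_eq; have [y_asg [beta_ge0 _]] := y_eq.
apply/le_anti; rewrite dual_gap_ge0 ?andbT; last by case: x_asg.
rewrite -(equilibrium_dual_gap y_eq); apply: le_trans (dual_gap_le x_asg beta_ge0) _.
by rewrite !lerD2r x_min.
Qed.

End Duality.

Section SingleSourcedMinCost.
Variables (R : realFieldType) (Dn Fc : finType).
Variables (l : Dn -> Fc -> R) (Dm : Dn -> R) (C : Fc -> R) (x : Dn -> Fc -> R).
Variable jsel : Dn -> Fc.
Hypothesis Dm_gt0 : forall i, 0 < Dm i.
Hypothesis x_min : min_cost_assignment l Dm C x.
Hypothesis x_single :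
  forall i, x i (jsel i) = Dm i /\ (forall j, j != jsel i -> x i j = 0).
Local Notation G := (garc l jsel).
Local Notation r := (@groot Dn Fc).
Local Notation vF := (@vF Dn Fc).
Local Notation vD := (@vD Dn Fc).

Lemma x_assignment : is_assignment Dm C x.
Proof. by case: x_min. Qed.

Lemma jsel_flow_bounded_below : exists2 eps : R, 0 < eps & forall i, eps <= x i (jsel i).
Proof.
exists (\big[Num.min/1]_i Dm i); first by apply: lt_bigmin => // i _.
by move=> i; rewrite (x_single i).1 bigmin_le.
Qed.

Lemma garc_no_neg_cycle : no_neg_cycle G.
Proof.
move=> u p [_ [up [lp Up]]]; have [eps eps_gt0 eps_le] := jsel_flow_bounded_below.
apply: (min_cost_walk_weight_ge0 up x_min Up eps_gt0 eps_le) => [i|j]; rewrite lp //.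
by rewrite subrr mulr0 addr0; case: x_assignment => _ [_].
Qed.

Lemma slack_path_weight_ge0 j : \sum_i x i j < C j ->
  forall p, dpath G r p (vF j) -> 0 <= walk_weight G r p.
Proof.
move=> slack p [rp [lp /andP[_ Up]]].
have [eps0 eps0_gt0 eps0_le] := jsel_flow_bounded_below.
pose eps := Num.min eps0 (C j - \sum_i x i j).
have eps_gt0 : 0 < eps by rewrite lt_min eps0_gt0 subr_gt0.
have eps_le i : eps <= x i (jsel i) by rewrite ge_min eps0_le.
apply: (min_cost_walk_weight_ge0 rp x_min Up eps_gt0 eps_le) => [i|j']; rewrite lp //=.
rewrite subr0 vF_eq; have [<-|jj'] := eqVneq j j'.
  by rewrite mulr1 -lerBrDl ge_min lexx orbT.
by rewrite mulr0 addr0; case: x_assignment => _ [_].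
Qed.

Lemma garc_min_path_weights_exist : exists (beta : Fc -> R) (delta : Dn -> R),
  (forall j, is_min_path_weight G r (vF j) (- beta j)) /\
  (forall i, is_min_path_weight G r (vD i) (- delta i)).
Proof.
have reach_vF j : exists m, is_min_path_weight G r (vF j) m.
  by apply: min_path_weight_exists; exists [:: vF j].
have reach_vD i : exists m, is_min_path_weight G r (vD i) m.
  apply: min_path_weight_exists; exists [:: vF (jsel i); vD i].
  by split; rewrite /= /is_arc ?garc_vF_vD.
have [mF mF_min] := fin_all_exists reach_vF.
have [mD mD_min] := fin_all_exists reach_vD.
by exists (fun j => - mF j), (fun i => - mD i); split => *; rewrite opprK.
Qed.

Lemma equilibrium_jsel_opt x' beta' : equilibrium l Dm C x' beta' ->
  forall i j, l i (jsel i) + beta' (jsel i) <= l i j + beta' j.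
Proof.
move=> eq' i j; have gap0 := min_cost_dual_gap x_min eq'.
have gapE : dual_gap l beta' x =
    \sum_i Dm i * (l i (jsel i) + beta' (jsel i) - delay l beta' i).
  apply: eq_bigr => k _; rewrite (bigD1 (jsel k)) //= big1 ?addr0.
    by rewrite (x_single k).1 mulrC.
  by move=> j' j'k; rewrite (x_single k).2 // mulr0.
have term_ge0 k : true -> 0 <= Dm k * (l k (jsel k) + beta' (jsel k) - delay l beta' k).
  by move=> _; rewrite mulr_ge0 ?(ltW (Dm_gt0 k)) // subr_ge0; apply: fmin_le.
have /eqP := psumr_eq0P term_ge0 (etrans (esym gapE) gap0) (i := i) isT.
rewrite mulf_eq0 (gt_eqF (Dm_gt0 i)) subr_eq0 => /eqP ->; exact: fmin_le.
Qed.

Section ShortestPathPotentials.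
Variables (beta : Fc -> R) (delta : Dn -> R).
Hypothesis beta_min : forall j, is_min_path_weight G r (vF j) (- beta j).
Hypothesis delta_min : forall i, is_min_path_weight G r (vD i) (- delta i).

Lemma beta_ge0 j : 0 <= beta j.
Proof.
have := (beta_min j).2 [:: vF j]; rewrite walk_weight_cons walk_weight_nil /=.
by rewrite addr0 oppr_le0; apply; split.
Qed.

Lemma delta_eq i : delta i = l i (jsel i) + beta (jsel i).
Proof.
apply/eqP; rewrite -eqr_opp eq_le; apply/andP; split.
  have := min_path_weight_arc garc_no_neg_cycle (beta_min (jsel i)) (delta_min i).
  by rewrite /is_arc garc_vF_vD /= => /(_ isT); lra.
have [a [q [rq_a a_i] ->]] := min_path_weight_last_arc (delta_min i) isT.
move: rq_a; rewrite (garc_into_vD a_i) garc_vF_vD /= => rq.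
by have := (beta_min (jsel i)).2 q rq; lra.
Qed.

Lemma jsel_opt i j : l i (jsel i) + beta (jsel i) <= l i j + beta j.
Proof.
have [->//|ji] := eqVneq j (jsel i).
have := min_path_weight_arc garc_no_neg_cycle (delta_min i) (beta_min j).
by rewrite /is_arc garc_vD_vF //= delta_eq => /(_ isT); lra.
Qed.

Lemma delay_eq i : delay l beta i = delta i.
Proof. by rewrite delta_eq /delay (fmin_eq (jsel_opt i)). Qed.

Lemma beta_slack j : \sum_i x i j < C j -> beta j = 0.
Proof.
move=> slack; have [[p [rp_j wp]] _] := beta_min j.
apply/le_anti; rewrite beta_ge0 andbT -oppr_ge0 -wp.
exact: slack_path_weight_ge0 slack p rp_j.
Qed.

Lemma x_beta_equilibrium : equilibrium l Dm C x beta.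
Proof.
split; first exact: x_assignment.
split; first exact: beta_ge0.
split; last exact: beta_slack.
move=> i j x_gt0 j'; have [->|ji] := eqVneq j (jsel i); first exact: jsel_opt.
by move: x_gt0; rewrite (x_single i).2 // ltxx.
Qed.

Lemma beta_le_equilibrium x' beta' :
  equilibrium l Dm C x' beta' -> forall j, beta j <= beta' j.
Proof.
move=> eq' j; have [_ [beta'_ge0 _]] := eq'.
(* On demands [phi] is minus the delay under [beta'], by [equilibrium_jsel_opt]. *)
pose phi (v : Vtx Dn Fc) : R :=
  match v with
  | None => 0
  | Some (inl k) => - beta' k
  | Some (inr d) => - (l d (jsel d) + beta' (jsel d))
  end.
have phi_feas : feasible_potential G phi.
  move=> [[ja|ia]|] [[jb|ib]|]; rewrite /is_arc //=.
  - by case: ifP => // /eqP -> _ /=; lra.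
  - by case: ifP => // _ _ /=; have := equilibrium_jsel_opt eq' ia jb; lra.
  - by move=> _; have := beta'_ge0 jb; lra.
by have := min_path_weight_ge_potential phi_feas (beta_min j); rewrite /= subr0; lra.
Qed.

Lemma delta_le_delay x' beta' :
  equilibrium l Dm C x' beta' -> forall i, delta i <= delay l beta' i.
Proof.
move=> eq' i; rewrite -delay_eq; apply: le_fmin => j.
by rewrite lerD2l; apply: beta_le_equilibrium eq' j.
Qed.

End ShortestPathPotentials.

End SingleSourcedMinCost.

Theorem theorem3p4 (R : realFieldType) (Dn Fc : finType)
  (l : Dn -> Fc -> R) (Dm : Dn -> R) (C : Fc -> R)
  (x : Dn -> Fc -> R) (jsel : Dn -> Fc) :
  instance l Dm C ->
  (forall i, 0 < Dm i) ->
  min_cost_assignment l Dm C x ->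
  (forall i, x i (jsel i) = Dm i /\ (forall j, j != jsel i -> x i j = 0)) ->
  no_neg_cycle (garc l jsel) /\
  (exists (beta : Fc -> R) (delta : Dn -> R),
     (forall j, is_min_path_weight (garc l jsel) (@groot Dn Fc) (@vF Dn Fc j) (- beta j)) /\
     (forall i, is_min_path_weight (garc l jsel) (@groot Dn Fc) (@vD Dn Fc i) (- delta i))) /\
  (forall (beta : Fc -> R) (delta : Dn -> R),
     (forall j, is_min_path_weight (garc l jsel) (@groot Dn Fc) (@vF Dn Fc j) (- beta j)) ->
     (forall i, is_min_path_weight (garc l jsel) (@groot Dn Fc) (@vD Dn Fc i) (- delta i)) ->
     equilibrium l Dm C x beta /\
     (forall i, delta i = delay l beta i) /\
     (forall (x' : Dn -> Fc -> R) (beta' : Fc -> R),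
        equilibrium l Dm C x' beta' ->
        (forall i, delta i <= delay l beta' i) /\
        total_delay l Dm beta <= total_delay l Dm beta')).
Proof.
move=> _ Dm_gt0 x_min x_single.
have no_neg := garc_no_neg_cycle Dm_gt0 x_min x_single.
split=> //; split=> [|beta delta beta_min delta_min]; first exact: garc_min_path_weights_exist.
have delayE := delay_eq Dm_gt0 x_min x_single beta_min delta_min.
split; first exact: (x_beta_equilibrium Dm_gt0 x_min x_single beta_min delta_min).
split=> [i|x' beta' eq']; first by rewrite delayE.
have delta_le := delta_le_delay Dm_gt0 x_min x_single beta_min delta_min eq'.
split=> //; apply: ler_sum => i _.
by rewrite ler_wpM2l ?(ltW (Dm_gt0 i)) ?delayE.
Qed.
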